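(* The thresholding algorithm with $t$ thresholds cannot achieve an approximation factor better than $1-\left(1-\frac{1}{t+1}\right)^t$. Precisely: let $t\ge1$ be an integer and $\varepsilon>0$. Then there is $k_0$ such that for every integer $k\ge k_0$ and all reals $c_1\ge c_2\ge\dots\ge c_t>0$, there exist a finite ground set $V$, a monotone submodular $f:2^V\to\mathbb{R}_{\ge0}$ with $OPT:=\max_{A\subseteq V,|A|\le k}f(A)>0$, and an execution of the thresholding algorithm with thresholds $\alpha_\ell=c_\ell\,\frac{OPT}{k}$ ($1\le \ell\le t$) whose output $G$ satisfies $f(G)\le\left(1-\left(1-\frac{1}{t+1}\right)^t+\varepsilon\right)OPT$.
   Context: A function $f:2^V\to\mathbb{R}_{\ge0}$ is submodular if $f(A\cup\{e\})-f(A)\ge f(B\cup\{e\})-f(B)$ for all $A\subseteq B\subseteq V$ and $e\notin B$, and monotone if $f(A\cup\{e\})-f(A)\ge 0$ for all $A$ and $e\notin A$. Write $f_A(e)=f(A\cup\{e\})-f(A)$. The thresholding algorithm with cardinality bound $k$ and thresholds $\alpha_1\ge\alpha_2\ge\dots\ge\alpha_t>0$ (which may be chosen with knowledge of $OPT$ and $k$): start with $G=\emptyset$; for $\ell=1,\dots,t$ in turn, as long as $|G|<k$ and some $e\in V\setminus G$ has $f_G(e)\ge\alpha_\ell$, add one such element $e$ to $G$ (the choice among eligible elements, i.e. the processing order, is arbitrary); when no such element exists or $|G|=k$, move to the next threshold. Output $G$. An execution is any run consistent with these rules. *)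

From HB Require Import structures.
From mathcomp Require Import all_boot all_order all_algebra.
From mathcomp Require Import reals.
Set Implicit Arguments. Unset Strict Implicit. Unset Printing Implicit Defensive.
Import Order.TTheory GRing.Theory Num.Theory.
Local Open Scope ring_scope.

Section Defs.
Variables (R : realType) (V : finType).

Definition marg (f : {set V} -> R) (A : {set V}) (e : V) : R := f (e |: A) - f A.

Definition nonneg_fun (f : {set V} -> R) : Prop := forall A, 0 <= f A.

Definition monotone (f : {set V} -> R) : Prop :=
  forall (A : {set V}) (e : V), e \notin A -> 0 <= marg f A e.

Definition submodular (f : {set V} -> R) : Prop :=
  forall (A B : {set V}) (e : V), A \subset B -> e \notin B -> marg f B e <= marg f A e.

(* OPT = max_{|A| <= k} f A  (f is nonnegative, so 0 as the neutral element is harmless) *)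
Definition OPT (f : {set V} -> R) (k : nat) : R :=
  \big[Num.max/0]_(A : {set V} | (#|A| <= k)%N) f A.

(* thr_exec f k t alpha l G out : starting at threshold index l (0-based, thresholds
   alpha 0 >= ... >= alpha (t-1)) with current set G, some execution of the
   thresholding algorithm outputs out. *)
Inductive thr_exec (f : {set V} -> R) (k t : nat) (alpha : nat -> R) :
    nat -> {set V} -> {set V} -> Prop :=
  | thr_done (l : nat) (G : {set V}) : (t <= l)%N -> thr_exec f k t alpha l G G
  | thr_add (l : nat) (G : {set V}) (e : V) (out : {set V}) : (l < t)%N -> (#|G| < k)%N -> e \notin G ->
      alpha l <= marg f G e -> thr_exec f k t alpha l (e |: G) out ->
      thr_exec f k t alpha l G out
  | thr_next (l : nat) (G out : {set V}) : (l < t)%N ->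
      ((k <= #|G|)%N \/ (forall e : V, e \notin G -> marg f G e < alpha l)) ->
      thr_exec f k t alpha l.+1 G out ->
      thr_exec f k t alpha l G out.

End Defs.

From HB Require Import structures.
From mathcomp Require Import all_boot all_order all_algebra.
From mathcomp Require Import reals.
From mathcomp Require Import ring lra zify.
Import Order.TTheory GRing.Theory Num.Theory.
Local Open Scope ring_scope.
Set Implicit Arguments. Unset Strict Implicit. Unset Printing Implicit Defensive.

(* Take k elements (true, i) forming an optimal solution and k decoys (false, i), and let
   f S = 1 - (1 - o/k) * r_g, where S contains o optimal elements and g decoys.  The
   residual r drops by c_l/k with each decoy picked while it lies in [c_l, c_(l-1)), so a
   decoy gains exactly the threshold c_l/k, while an optimal element gains r/k < c_l/k: the
   algorithm may pick only decoys, ending with f G = 1 - r_g <= 1 - r_k, whereas OPT = 1.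
   Within the phase of threshold l the residual falls linearly but stays above
   c_l (1 - 1/k), so a phase of p picks divides it by at most 1 + p/(k-1).  With at most
   t phases and k picks in all, AM-GM gives r_k >= (1 + k/(t(k-1)))^-t, which tends to
   (1 - 1/(t+1))^t as k grows. *)

Section AMGM.
Variable R : realFieldType.
Implicit Types (y z : R) (l : nat).

(* By AM-GM, the largest value of prod_(i < l) (1 + y_i) over nonnegative y_i with sum z. *)
Definition amgm_bound l z : R := (1 + z / l%:R) ^+ l.

Lemma amgm_bound_ge0 l z : 0 <= z -> 0 <= amgm_bound l z.
Proof. by move=> z_ge0; rewrite exprn_ge0 // addr_ge0 ?divr_ge0. Qed.

Lemma amgm_boundS l y z : 0 <= y -> 0 <= z ->
  (1 + y) * amgm_bound l z <= amgm_bound l.+1 (z + y).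
Proof.
move=> y_ge0 z_ge0; case: l => [|l].
  by rewrite /amgm_bound expr0 mulr1 expr1 divr1; lra.
pose E (i : 'I_l.+2) := if i == ord_max then 1 + y else 1 + z / l.+1%:R.
have E_ge0 : {in predT, forall i, 0 <= E i}.
  by move=> i _; rewrite /E; case: ifP => _; rewrite addr_ge0 ?divr_ge0.
have := (leif_AGM E_ge0).1.
rewrite card_ord big_ord_recr [\sum_(i < _) _]big_ord_recr /= /E eqxx.
have widen_neq (i : 'I_l.+1) : (widen_ord (leqnSn _) i == ord_max) = false.
  by rewrite -val_eqE /= ltn_eqF.
under eq_bigr => i _ do rewrite widen_neq.
under [\sum_(i < _) _]eq_bigr => i _ do rewrite widen_neq.
rewrite prodr_const sumr_const !card_ord mulrC.
congr (_ <= _); congr (_ ^+ _); rewrite /amgm_bound -mulr_natr; field.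
have l_ge0 := ler0n R l.
by rewrite !lt0r_neq0 //; lra.
Qed.

Lemma le_amgm_bound_count l l' z : 0 <= z -> (l <= l')%N ->
  amgm_bound l z <= amgm_bound l' z.
Proof.
move=> z_ge0 /subnK <-; elim: (l' - l)%N => [|n IH] //.
apply: le_trans IH _.
by have := amgm_boundS (n + l) (lexx 0) z_ge0; rewrite !addr0 mul1r.
Qed.

Lemma le_amgm_bound_sum l z z' : 0 <= z -> z <= z' ->
  amgm_bound l z <= amgm_bound l z'.
Proof.
move=> z_ge0 le_zz'.
have base_ge0 x : 0 <= x -> 0 <= 1 + x / l%:R by move=> ?; rewrite addr_ge0 ?divr_ge0.
rewrite /amgm_bound lerXn2r ?nnegrE ?base_ge0 ?(le_trans z_ge0) //.
by rewrite lerD2l ler_wpM2r ?invr_ge0.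
Qed.

Lemma subrXX_le_mul n (a b : R) : 0 <= b -> b <= a -> a <= 1 ->
  a ^+ n - b ^+ n <= n%:R * (a - b).
Proof.
move=> b_ge0 le_ba a_le1; rewrite subrXX mulrC ler_wpM2r ?subr_ge0 //.
rewrite -[n in n%:R]card_ord -sumr_const ler_sum // => i _.
have a_ge0 := le_trans b_ge0 le_ba; have b_le1 := le_trans le_ba a_le1.
by rewrite mulr_ile1 ?exprn_ge0 ?exprn_ile1.
Qed.

Lemma approx_ratio_bound (t : nat) (d u : R) : (0 < t)%N -> 0 <= d -> 0 <= u ->
  1 <= u * amgm_bound t (1 + d) -> 1 - u <= 1 - (1 - 1 / t.+1%:R) ^+ t + d.
Proof.
move=> t_gt0 d_ge0 u_ge0 u_bound.
have T_ge1 : 1 <= t%:R :> R by rewrite ler1n.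
set a := 1 - 1 / t.+1%:R; set b := t%:R / (t%:R + 1 + d).
have a_eq : a = t%:R / (t%:R + 1) by rewrite /a -natr1; field; lra.
have b_ge0 : 0 <= b by rewrite divr_ge0 //; lra.
have le_ba : b <= a by rewrite a_eq ler_wpM2l // lef_pV2 ?posrE; lra.
have a_le1 : a <= 1 by rewrite /a lerBlDr lerDl divr_ge0.
have b_amgm : b ^+ t * amgm_bound t (1 + d) = 1.
  rewrite /amgm_bound -exprMn /b [_ * _](_ : _ = 1) ?expr1n //.
  by field; rewrite !lt0r_neq0 //; lra.
have le_bu : b ^+ t <= u.
  have := ler_wpM2l (exprn_ge0 t b_ge0) u_bound.
  by rewrite mulr1 mulrCA b_amgm mulr1.
have : t%:R * (a - b) <= d.
  rewrite a_eq /b -subr_ge0; move: (t%:R) T_ge1 => T T_ge1.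
  have -> : d - T * (T / (T + 1) - T / (T + 1 + d))
          = d * (T * (1 + d) + T + 1 + d) / ((T + 1) * (T + 1 + d)).
    by field; rewrite !lt0r_neq0 //; lra.
  by apply: divr_ge0; apply: mulr_ge0; nra.
have := subrXX_le_mul t b_ge0 le_ba a_le1; lra.
Qed.

End AMGM.

Section HardInstance.
Variables (R : realType) (t k : nat) (c : nat -> R).
Hypothesis c_noninc : forall i j, (i <= j)%N -> (j < t)%N -> c j <= c i.
Hypothesis c_pos : forall i, (i < t)%N -> 0 < c i.
Hypothesis k_gt1 : (1 < k)%N.
Implicit Types (x y : R) (l m : nat).

Let k_gt0 : 0 < k%:R :> R. Proof. by rewrite ltr0n ltnW. Qed.
Let k1_gt0 : 0 < k%:R - 1 :> R. Proof. by rewrite subr_gt0 ltr1n. Qed.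
Let natr_div_k1_ge0 n : 0 <= n%:R / (k%:R - 1) :> R.
Proof. by rewrite divr_ge0 // ltW. Qed.

(* [level x] is the first threshold index l with c_l <= x, and t if there is none;
   [resid m] is 1 - f G once G consists of m decoys, each decoy picked at level l
   lowering it by c_l / k. *)
Definition level x : nat := find (fun l => c l <= x) (iota 0 t).
Definition cut x : R := if (level x < t)%N then c (level x) / k%:R else 0.
Definition resid m : R := iter m (fun x => x - cut x) 1.

Lemma level_le x : (level x <= t)%N.
Proof. by have := find_size (fun l => c l <= x) (iota 0 t); rewrite size_iota. Qed.

Lemma c_level_le x : (level x < t)%N -> c (level x) <= x.
Proof.
move=> lvl_lt; have has_lvl : has (fun l => c l <= x) (iota 0 t).
  by rewrite has_find size_iota.
by have := nth_find 0%N has_lvl; rewrite nth_iota.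
Qed.

Lemma lt_c_before_level x l : (l < level x)%N -> x < c l.
Proof.
move=> lt_l; have l_lt_t := leq_trans lt_l (level_le x).
by have := before_find 0%N lt_l; rewrite nth_iota //= add0n => /negbT; rewrite -ltNge.
Qed.

Lemma le_level x y : x <= y -> (level y <= level x)%N.
Proof.
move=> le_xy; rewrite leqNgt; apply/negP => lt_lvl.
have := c_level_le (leq_trans lt_lvl (level_le y)).
by have := lt_c_before_level lt_lvl; lra.
Qed.

Lemma cut_ge0 x : 0 <= cut x.
Proof. by rewrite /cut; case: ifP => // /c_pos/ltW c_ge0; rewrite divr_ge0. Qed.

Lemma cut_le_div x : 0 <= x -> cut x <= x / k%:R.
Proof.
rewrite /cut; case: ifP => [/c_level_le le_cx _ | _ x_ge0]; first by rewrite ler_pM2r ?invr_gt0.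
by rewrite divr_ge0.
Qed.

Lemma le_cut x y : x <= y -> cut x <= cut y.
Proof.
move=> le_xy; rewrite {1}/cut; case: ifP => [lvlx_lt | _]; last exact: cut_ge0.
have le_lvl := le_level le_xy.
by rewrite /cut (leq_ltn_trans le_lvl lvlx_lt) ler_pM2r ?invr_gt0 // c_noninc.
Qed.

Lemma residS m : resid m.+1 = resid m - cut (resid m).
Proof. by []. Qed.

Lemma resid_ge0 m : 0 <= resid m.
Proof.
elim: m => [|m IH]; rewrite ?residS ?subr_ge0 ?(le_trans (cut_le_div IH)) //.
by rewrite ler_pdivrMr // ler_peMr // ler1n ltnW.
Qed.

Lemma resid_anti m m' : (m <= m')%N -> resid m' <= resid m.
Proof.
move=> /subnK <-; elim: (m' - m)%N => [|n IH] //.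
by rewrite addSn residS (le_trans _ IH) // lerBlDr lerDl cut_ge0.
Qed.

Lemma resid_le1 m : resid m <= 1.
Proof. exact: (resid_anti (leq0n m)). Qed.

(* The picks made so far fall into phases by level: q picks in earlier phases and p picks
   in the current phase l.  The fourth clause bounds the residual at the start of phase l
   by AM-GM over the earlier phases; the last holds because each pick of phase l starts
   from a residual of at least c_l. *)
Definition phase_inv m l (p q : nat) : Prop :=
  [/\ (l < t)%N, (l <= level (resid m))%N, (p + q <= m)%N,
      1 <= (resid m + p%:R * c l / k%:R) * amgm_bound l (q%:R / (k%:R - 1)) &
      (0 < p)%N -> c l * (k%:R - 1) / k%:R <= resid m].

Lemma phase_inv0 : (0 < t)%N -> phase_inv 0 0 0 0.
Proof. by split; rewrite // !mul0r addr0 mul1r /amgm_bound expr0. Qed.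

Lemma phase_inv_close m l p q : phase_inv m l p q ->
  1 <= resid m * amgm_bound l.+1 ((p + q)%:R / (k%:R - 1)).
Proof.
case=> _ _ _ start_bound step_bound.
have le_start : resid m + p%:R * c l / k%:R <= resid m * (1 + p%:R / (k%:R - 1)).
  case: (posnP p) => [-> | /step_bound le_c]; first by rewrite !mul0r !addr0 mulr1.
  rewrite mulrDr mulr1 lerD2l -mulrA [resid m * _]mulrCA ler_wpM2l ?ler0n //.
  by rewrite ler_pdivlMr // mulrAC.
apply: le_trans start_bound _.
apply: le_trans (ler_wpM2r (amgm_bound_ge0 _ (natr_div_k1_ge0 q)) le_start) _.
rewrite -mulrA ler_wpM2l ?resid_ge0 //.
have := amgm_boundS l (natr_div_k1_ge0 p) (natr_div_k1_ge0 q).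
by rewrite -mulrDl -natrD addnC.
Qed.

Lemma phase_invS m l p q : phase_inv m l p q -> exists l' p' q', phase_inv m.+1 l' p' q'.
Proof.
move=> inv; case: (inv) => l_lt le_l pq_le start_bound step_bound.
set x := resid m in le_l start_bound step_bound.
have le_lvl : (level x <= level (resid m.+1))%N by apply/le_level/resid_anti.
have [lvl_lt | lvl_ge] := ltnP (level x) t; last first.
  have resid_eq : resid m.+1 = x by rewrite residS /cut ltnNge lvl_ge subr0.
  by exists l, p, q; split; rewrite ?resid_eq // leqW.
have resid_step : resid m.+1 = x - c (level x) / k%:R by rewrite residS /cut lvl_lt.
have close_step : c (level x) * (k%:R - 1) / k%:R <= resid m.+1.
  rewrite resid_step mulrBr mulr1 mulrBl mulfK ?lt0r_neq0 //.
  by have := c_level_le lvl_lt; lra.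
have [lt_l | eq_l] : (l < level x)%N \/ l = level x by lia.
  exists (level x), 1%N, (p + q)%N; split => //.
  rewrite resid_step mul1r subrK; apply: le_trans (phase_inv_close inv) _.
  by rewrite ler_wpM2l ?resid_ge0 // le_amgm_bound_count.
exists l, p.+1, q; rewrite -eq_l in resid_step close_step le_lvl; split => //.
suff -> : resid m.+1 + p.+1%:R * c l / k%:R = x + p%:R * c l / k%:R by [].
by rewrite resid_step -natr1; ring.
Qed.

Lemma resid_amgm_ge1 : (0 < t)%N -> 1 <= resid k * amgm_bound t (1 + (k%:R - 1)^-1).
Proof.
move=> t_gt0; have inv m : exists l p q, phase_inv m l p q.
  elim: m => [|m [l [p [q /phase_invS]]]] //.
  by exists 0%N, 0%N, 0%N; exact: phase_inv0.
have [l [p [q inv_k]]] := inv k; case: (inv_k) => l_lt _ pq_le _ _.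
apply: le_trans (phase_inv_close inv_k) _.
rewrite ler_wpM2l ?resid_ge0 // (le_trans (le_amgm_bound_count _ l_lt)) //.
apply: le_amgm_bound_sum => //.
rewrite [1 + _](_ : _ = k%:R / (k%:R - 1)); last by field; rewrite lt0r_neq0.
by rewrite ler_wpM2r ?invr_ge0 ?ler_nat ?(ltW k1_gt0).
Qed.

Implicit Types (S A B : {set bool * 'I_k}) (j : 'I_k).

Definition side (b : bool) S : nat := #|[set i | (b, i) \in S]|.

Definition hard_fun S : R :=
  1 - (1 - (side true S)%:R / k%:R) * resid (side false S).

Lemma side_le b S : (side b S <= k)%N.
Proof. by rewrite /side (leq_trans (max_card _)) ?card_ord. Qed.

Lemma side_subset b A B : A \subset B -> (side b A <= side b B)%N.
Proof.
move=> /subsetP sAB; apply/subset_leq_card/subsetP => i.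
by rewrite !inE => /sAB.
Qed.

Lemma side_setU1 b b' j S : (b, j) \notin S ->
  side b' ((b, j) |: S) = ((b == b') + side b' S)%N.
Proof.
move=> jS; rewrite /side; have [<- | neq_bb'] := eqVneq b b'.
  have -> : [set i | (b, i) \in (b, j) |: S] = j |: [set i | (b, i) \in S].
    by apply/setP => i; rewrite !inE xpair_eqE eqxx.
  by rewrite cardsU1 inE jS.
congr #|pred_of_set _|; apply/setP => i.
by rewrite !inE xpair_eqE eq_sym (negbTE neq_bb').
Qed.

Lemma marg_hard_true A j : (true, j) \notin A ->
  marg hard_fun A (true, j) = resid (side false A) / k%:R.
Proof. by move=> jA; rewrite /marg /hard_fun !side_setU1 //= -natr1; ring. Qed.

Lemma marg_hard_false A j : (false, j) \notin A ->
  marg hard_fun A (false, j) =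
  (1 - (side true A)%:R / k%:R) * cut (resid (side false A)).
Proof. by move=> jA; rewrite /marg /hard_fun !side_setU1 //= !add0n; ring. Qed.

Lemma one_sub_side_ge0 S : 0 <= 1 - (side true S)%:R / k%:R :> R.
Proof. by rewrite subr_ge0 ler_pdivrMr // mul1r ler_nat side_le. Qed.

Lemma hard_fun_le1 S : hard_fun S <= 1.
Proof. by rewrite lerBlDr lerDl mulr_ge0 ?one_sub_side_ge0 ?resid_ge0. Qed.

Lemma hard_fun_nonneg : nonneg_fun hard_fun.
Proof.
move=> S; rewrite subr_ge0 mulr_ile1 ?one_sub_side_ge0 ?resid_ge0 ?resid_le1 //.
by rewrite lerBlDr lerDl divr_ge0.
Qed.

Lemma hard_fun_monotone : monotone hard_fun.
Proof.
move=> A [[] j] jA; first by rewrite marg_hard_true // divr_ge0 ?resid_ge0.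
by rewrite marg_hard_false // mulr_ge0 ?one_sub_side_ge0 ?cut_ge0.
Qed.

Lemma hard_fun_submodular : submodular hard_fun.
Proof.
move=> A B [[] j] sAB jB; have jA : _ \notin A := contra (subsetP sAB _) jB.
  rewrite !marg_hard_true // ler_wpM2r ?invr_ge0 ?ler0n //.
  exact/resid_anti/side_subset.
rewrite !marg_hard_false // ler_pM ?one_sub_side_ge0 ?cut_ge0 //.
  by rewrite lerD2l lerN2 ler_wpM2r ?invr_ge0 ?ler0n // ler_nat side_subset.
exact/le_cut/resid_anti/side_subset.
Qed.

Lemma OPT_hard_fun : OPT hard_fun k = 1.
Proof.
apply/le_anti/andP; split.
  apply: (big_ind (fun x => x <= 1)) => [|x y x_le1 y_le1|S _]; first exact: ler01.
    by rewrite ge_max x_le1 y_le1.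
  exact: hard_fun_le1.
pose O := [set (true, i) | i : 'I_k].
have O_le : (#|O| <= k)%N by rewrite (leq_trans (leq_imset_card _ _)) ?card_ord.
have side_O : side true O = k.
  rewrite /side; have -> : [set i | (true, i) \in O] = [set: 'I_k].
    by apply/setP => i; rewrite !inE; apply/imsetP; exists i.
  by rewrite cardsT card_ord.
rewrite /OPT (bigD1 O) //= le_max /hard_fun side_O divff ?lt0r_neq0 //.
by rewrite subrr mul0r subr0 lexx.
Qed.

Implicit Types (I J : {set 'I_k}).

Definition decoy_set I : {set bool * 'I_k} := [set (false, i) | i in I].

Let pair_false_inj : injective (pair false : 'I_k -> bool * 'I_k).
Proof. by move=> i j []. Qed.

Lemma mem_decoy_set I j : ((false, j) \in decoy_set I) = (j \in I).
Proof. exact: mem_imset. Qed.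

Lemma card_decoy_set I : #|decoy_set I| = #|I|.
Proof. exact: card_imset. Qed.

Lemma decoy_setU1 I j : decoy_set (j |: I) = (false, j) |: decoy_set I.
Proof. exact: imsetU1. Qed.

Lemma side_decoy_set b I : side b (decoy_set I) = if b then 0%N else #|I|.
Proof.
rewrite /side; case: b.
  have -> : [set i | (true, i) \in decoy_set I] = set0.
    by apply/setP => i; rewrite !inE; apply/imsetP => -[].
  exact: cards0.
have -> : [set i | (false, i) \in decoy_set I] = I.
  by apply/setP => i; rewrite inE mem_decoy_set.
by [].
Qed.

Lemma hard_fun_decoys I : hard_fun (decoy_set I) = 1 - resid #|I|.
Proof. by rewrite /hard_fun !side_decoy_set mul0r subr0 mul1r. Qed.

Lemma marg_decoy_pick I j : j \notin I ->
  marg hard_fun (decoy_set I) (false, j) = cut (resid #|I|).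
Proof.
by move=> jI; rewrite marg_hard_false ?mem_decoy_set // !side_decoy_set mul0r subr0 mul1r.
Qed.

Lemma marg_decoy_lt I l e : (l < level (resid #|I|))%N -> e \notin decoy_set I ->
  marg hard_fun (decoy_set I) e < c l / k%:R.
Proof.
move=> lt_l; have l_lt := leq_trans lt_l (level_le _).
case: e => -[] j eI.
  by rewrite marg_hard_true // side_decoy_set ltr_pM2r ?invr_gt0 ?lt_c_before_level.
rewrite marg_decoy_pick -?mem_decoy_set // /cut; case: ifP => lvl_lt.
  rewrite ltr_pM2r ?invr_gt0 //.
  by have := c_level_le lvl_lt; have := lt_c_before_level lt_l; lra.
by rewrite divr_gt0 ?c_pos.
Qed.

(* The execution picks a decoy at threshold l exactly while the residual has level l. *)
Lemma thr_exec_decoys (alpha : nat -> R) : (forall l, alpha l = c l / k%:R) ->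
  forall l I, (l <= t)%N -> ((#|I| < k)%N -> (l <= level (resid #|I|))%N) ->
  exists J, thr_exec hard_fun k t alpha l (decoy_set I) (decoy_set J).
Proof.
move=> alphaE l I; move: {2}(t - l + (k - #|I|))%N (leqnn (t - l + (k - #|I|))) => n.
elim: n l I => [|n IH] l I fuel l_le lvl_ok;
  have [t_le | l_lt] := leqP t l; try by exists I; apply: thr_done.
  by lia.
have [/andP [lt_k /eqP lvl_l] | no_pick] := boolP ((#|I| < k)%N && (level (resid #|I|) == l)).
  have [j jI] : exists j, j \notin I.
    have /set0Pn [j] : ~: I != set0.
      by rewrite -card_gt0; have := cardsC I; rewrite card_ord; lia.
    by rewrite inE; exists j.
  have card_jI : #|j |: I| = #|I|.+1 by rewrite cardsU1 jI.
  have fuel' : (t - l + (k - #|j |: I|) <= n)%N by rewrite card_jI; lia.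
  have lvl_ok' : (#|j |: I| < k)%N -> (l <= level (resid #|j |: I|))%N.
    by move=> _; rewrite card_jI -lvl_l; exact/le_level/resid_anti.
  have [J exec] := IH l (j |: I) fuel' l_le lvl_ok'.
  exists J; apply: (thr_add (e := (false, j))) => //.
  - by rewrite card_decoy_set.
  - by rewrite mem_decoy_set.
  - by rewrite marg_decoy_pick // alphaE /cut lvl_l l_lt.
  - by rewrite -decoy_setU1.
have lvl_ok' : (#|I| < k)%N -> (l < level (resid #|I|))%N.
  by move=> lt_k; move: no_pick; rewrite lt_k ltn_neqAle eq_sym => ->; exact: lvl_ok.
have [|J exec] := IH l.+1 I _ l_lt lvl_ok'; first by lia.
exists J; apply: thr_next => //.
have [k_le | lt_k] := leqP k #|I|; first by left; rewrite card_decoy_set.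
by right => e eG; rewrite alphaE marg_decoy_lt ?lvl_ok'.
Qed.

End HardInstance.

Lemma inv_natr_pred_le (R : archiFieldType) (e : R) (k : nat) : 0 < e ->
  ((Num.bound e^-1).+2 <= k)%N -> (k%:R - 1)^-1 <= e.
Proof.
move=> e_gt0 le_k; have einv_ge0 : 0 <= e^-1 by rewrite invr_ge0 ltW.
have lt_N := archi_boundP einv_ge0.
have : (Num.bound e^-1)%:R + 2 <= k%:R :> R by rewrite -natrD ler_nat addn2.
move: (Num.bound e^-1)%:R lt_N => N lt_N le_Nk.
by rewrite -[e]invrK lef_pV2 ?posrE ?invr_gt0 //; lra.
Qed.

Unset Implicit Arguments.

Theorem theorem4 (R : realType) (t : nat) (eps : R) :
  (1 <= t)%N -> 0 < eps ->
  exists k0 : nat, forall k : nat, (k0 <= k)%N ->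
  forall c : nat -> R,
    (forall i j, (i <= j)%N -> (j < t)%N -> c j <= c i) ->
    (forall i, (i < t)%N -> 0 < c i) ->
    exists (V : finType) (f : {set V} -> R),
      [/\ nonneg_fun f, monotone f, submodular f, 0 < OPT f k &
      exists G : {set V},
        thr_exec f k t (fun l => c l * OPT f k / k%:R) 0 set0 G /\
        f G <= (1 - (1 - 1 / (t.+1)%:R) ^+ t + eps) * OPT f k].
Proof.
move=> t_gt0 eps_gt0; exists (Num.bound eps^-1).+2 => k le_k c c_noninc c_pos.
have k_gt1 : (1 < k)%N by apply: leq_trans le_k.
exists (bool * 'I_k)%type, (hard_fun t c); rewrite OPT_hard_fun //.
split; [exact: hard_fun_nonneg | exact: hard_fun_monotone |
        exact: hard_fun_submodular | exact: ltr01 | ].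
have [|J exec] := thr_exec_decoys c_pos k_gt1 (alpha := fun l => c l * 1 / k%:R) _
                    (leq0n t) (I := set0) (fun _ => leq0n _).
  by move=> l; rewrite mulr1.
rewrite [decoy_set set0]imset0 in exec; exists (decoy_set J); split => //.
rewrite mulr1 hard_fun_decoys.
have le_resid : resid t k c k <= resid t k c #|J|.
  exact: (resid_anti k c_pos (leq_trans (max_card _) (eq_leq (card_ord k)))).
have d_ge0 : 0 <= (k%:R - 1)^-1 :> R by rewrite invr_ge0 subr_ge0 ler1n ltnW.
have := approx_ratio_bound t_gt0 d_ge0 (resid_ge0 t c k_gt1 k)
          (resid_amgm_ge1 c_pos k_gt1 t_gt0).
have := inv_natr_pred_le eps_gt0 le_k.
lra.
Qed.
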